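(* Let $L\ge2$, $m\in\mathbb{R}$, $d_0=d_L=1$, $d_1,\dots,d_{L-1}\ge1$, and consider $$\mathcal{L}(\mathbf{w}) = (m-\mathbf{w}_L\mathbf{W}_{L-1}\cdots\mathbf{W}_2\mathbf{w}_1)^2,$$ where $\mathbf{w}_L\in\mathbb{R}^{1\times d_{L-1}}$, $\mathbf{w}_1\in\mathbb{R}^{d_1\times 1}$, $\mathbf{W}_i\in\mathbb{R}^{d_i\times d_{i-1}}$ for $2\le i\le L-1$, and $\mathbf{w}\in\mathbb{R}^N$ is the vector of all parameters, $N=\sum_{i=1}^L d_id_{i-1}$. Let $\mathbf{w}^*=(\mathbf{W}_1^*,\dots,\mathbf{W}_L^* )$ be any global minimizer, i.e. $\prod_{j=1}^L\mathbf{W}_j^*=m$ (writing $\mathbf{W}_1=\mathbf{w}_1$, $\mathbf{W}_L=\mathbf{w}_L$). Then $$\lambda_{\max}(\nabla^2\mathcal{L}(\mathbf{w}^* )) = 2\sum_{i=1}^L \sigma_{\max}\Big(\prod_{j=i+1}^L\mathbf{W}_j^*\Big)^2\,\sigma_{\max}\Big(\prod_{j=1}^{i-1}\mathbf{W}_j^*\Big)^2.$$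
   Context: For matrices $\mathbf{W}_j\in\mathbb{R}^{d_j\times d_{j-1}}$, $\prod_{j=n}^m\mathbf{W}_j := \mathbf{W}_m\mathbf{W}_{m-1}\cdots\mathbf{W}_n$ if $n\le m$, and the identity matrix of the appropriate size if $n>m$. $\sigma_{\max}$ denotes the largest singular value (spectral norm). $\nabla^2\mathcal{L}(\mathbf{w}^* )$ is the $N\times N$ Hessian of $\mathcal{L}$ with respect to $\mathbf{w}$, and $\lambda_{\max}$ its largest eigenvalue. *)

From mathcomp Require Import all_boot all_order all_algebra.
From mathcomp Require Import all_classical all_reals all_analysis.
Set Implicit Arguments. Unset Strict Implicit. Unset Printing Implicit Defensive.
Import Order.TTheory GRing.Theory Num.Theory.
Local Open Scope ring_scope.

Section DeepLinear.
Variable R : realType.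

Definition lambda_max n (A : 'M[R]_n) : R := sup [set a : R | eigenvalue A a].

Definition sigma_max m n (A : 'M[R]_(m, n)) : R := Num.sqrt (lambda_max (A^T *m A)).

Variable d : nat -> nat.

(* Layers are 0-indexed here: W i : 'M_(d (i+1), d i) is the paper's W_{i+1}.
   prodW W n k = W_(n+k-1) *m ... *m W_n  (k factors; identity if k = 0),
   i.e. the paper's  prod_{j=n+1}^{n+k} W_j. *)
Fixpoint prodW (W : forall i : nat, 'M[R]_(d i.+1, d i)) (n k : nat)
  : 'M[R]_(d (k + n), d n) :=
  match k with
  | 0 => 1%:M
  | k'.+1 => W (k' + n) *m prodW W n k'
  end.

Variable L : nat.

Definition Npar : nat := (\sum_(i < L) d i.+1 * d i)%N.

(* Unflattening of the parameter vector w in R^N into layers: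
   the block of w indexed by i is vec of the paper's W_{i+1}. *)
Definition layers (w : 'rV[R]_Npar) (i : nat) : 'M[R]_(d i.+1, d i) :=
  (if (i < L)%N as b return (i < L)%N = b -> 'M[R]_(d i.+1, d i)
   then fun h => @vec_mx R (d i.+1) (d i)
                   (@submxrow R L (fun j : 'I_L => (d j.+1 * d j)%N) 1
                      w (Ordinal h))
   else fun _ => 0) erefl.

(* Network output  W_L ... W_1 ; when d 0 = d L = 1 this 1x1 matrix has a
   single entry, which the double sum extracts. *)
Definition net_out (W : forall i : nat, 'M[R]_(d i.+1, d i)) : R :=
  \sum_(a < d (L + 0)) \sum_(b < d 0) prodW W 0 L a b.

Definition loss (m : R) (w : 'rV[R]_Npar) : R := (m - net_out (layers w)) ^+ 2.

End DeepLinear.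

Definition ebasis (R : realType) N (i : 'I_N) : 'rV[R]_N := delta_mx 0 i.

Definition partial (R : realType) N (f : 'rV[R]_N -> R) (j : 'I_N) (w : 'rV[R]_N) : R :=
  derive1 (fun t : R => f (w + t *: ebasis R j)) 0.

Definition hessian (R : realType) N (f : 'rV[R]_N -> R) (w : 'rV[R]_N) : 'M[R]_N :=
  \matrix_(i, j) partial (partial f j) i w.

(* The network output F(w) = W_L ... W_1 is affine along every coordinate line of
   the parameter space, because a coordinate direction perturbs a single layer.
   Hence at a global minimiser (F = m) the Hessian of (m - F)^2 is the rank-one
   matrix 2 g g^T with g = grad F, whose largest eigenvalue is 2 |g|^2.  The
   derivative of F along entry (a, b) of layer i is
   (W_L ... W_(i+1))_(0, a) * (W_(i-1) ... W_1)_(b, 0); since the outer widths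
   are 1 these products are a row and a column vector, for which the largest
   singular value is the Euclidean norm, and summing the squares over (a, b)
   gives the i-th term of the formula. *)
From mathcomp Require Import all_boot all_order all_algebra.
From mathcomp Require Import all_classical all_reals all_analysis.
From mathcomp Require Import ring zify.
Import Order.TTheory GRing.Theory Num.Theory.
Local Open Scope ring_scope.

Lemma derive1_mul_affine (R : realType) (a b c e : R) :
  derive1 (fun t : R => (a + b * t) * (c + e * t)) 0 = a * e + b * c.
Proof.
have affine_derive (x y : R) : is_derive (0 : R) 1 (fun t : R => x + y * t) y.
  have := @is_deriveD R R R (cst x) _ 0 1 0 _ _
    (@is_deriveZ R R R id y 0 1 1 (is_derive_id _ _)).
  by rewrite add0r /GRing.scale /= mulr1; apply; apply: is_derive_cst.
have := is_deriveM (affine_derive a b) (affine_derive c e).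
rewrite derive1E !mulr0 !addr0 => deriv.
by rewrite (@derive_val _ _ _ _ _ _ _ deriv) [c *: b]mulrC.
Qed.

Lemma sup_eq_greatest (R : realType) (E : set R) (M : R) :
  E M -> ubound E M -> sup E = M.
Proof.
move=> EM ubM; apply/le_anti/andP; split; first by apply: ge_sup => //; exists M.
by apply: ub_le_sup => //; exists M.
Qed.

Lemma lambda_max_rank1 (R : realType) n (u : 'rV[R]_n) (s : R) :
  (0 < n)%N -> 0 <= s ->
  lambda_max (\matrix_(i, j) (s * u 0 i * u 0 j)) = s * \sum_i u 0 i ^+ 2.
Proof.
move=> n_gt0 s_ge0; set M := \matrix_(i, j) _.
have mulM (v : 'rV[R]_n) : v *m M = (s * \sum_i v 0 i * u 0 i) *: u.
  apply/rowP => j; rewrite !mxE [s * _]mulrC -mulrA mulr_suml.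
  by apply: eq_bigr => i _; rewrite !mxE; ring.
have norm_ge0 : 0 <= \sum_i u 0 i ^+ 2 by apply: sumr_ge0 => i _; exact: sqr_ge0.
apply: sup_eq_greatest.
- apply/eigenvalueP; have [u0|u_neq0] := eqVneq u 0.
    have -> : \sum_i u 0 i ^+ 2 = 0 by apply: big1 => i _; rewrite u0 mxE expr0n.
    exists (const_mx 1); first by rewrite mulM u0 !scaler0 mulr0 scale0r.
    apply/negP => /eqP/rowP/(_ (Ordinal n_gt0)).
    by rewrite !mxE => /eqP; rewrite oner_eq0.
  by exists u => //; rewrite mulM; under eq_bigr do rewrite expr2.
- move=> a /eigenvalueP [v]; rewrite mulM => eigv v_neq0.
  set t := \sum_i v 0 i * u 0 i in eigv.
  have [t0|t_neq0] := eqVneq t 0.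
    move: eigv; rewrite t0 mulr0 scale0r => /esym/eqP.
    by rewrite scaler_eq0 (negbTE v_neq0) orbF => /eqP ->; exact: mulr_ge0.
  (* pair the eigen-equation a v = (s t) u with u *)
  have : a * t = s * t * \sum_i u 0 i ^+ 2.
    rewrite /t mulr_sumr mulr_sumr; apply: eq_bigr => i _.
    have := congr1 (fun w : 'rV[R]_n => w 0 i) eigv; rewrite !mxE => eigv_i.
    by rewrite mulrA -eigv_i /t; ring.
  move=> eq_at; suff -> : a = s * \sum_i u 0 i ^+ 2 by [].
  by apply: (mulIf t_neq0); rewrite eq_at; ring.
Qed.

(* The dimension that is 1 is only propositionally so (it is [d L] or [d 0] in
   use), hence the hypothesis [p = 1] and the single entry written as a sum. *)
Lemma sigma_max_row (R : realType) p n (A : 'M[R]_(p, n)) : p = 1%N -> (0 < n)%N ->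
  sigma_max A ^+ 2 = \sum_a (\sum_x A x a) ^+ 2.
Proof.
move=> p1 n_gt0; subst p; rewrite /sigma_max.
have -> : A^T *m A = \matrix_(i, j) (1 * A 0 i * A 0 j).
  by apply/matrixP => i j; rewrite !mxE big_ord1 !mxE mul1r.
rewrite lambda_max_rank1 // mul1r sqr_sqrtr; last first.
  by apply: sumr_ge0 => i _; exact: sqr_ge0.
by apply: eq_bigr => a _; rewrite big_ord1.
Qed.

Lemma sigma_max_col (R : realType) m q (B : 'M[R]_(m, q)) : q = 1%N ->
  sigma_max B ^+ 2 = \sum_b (\sum_y B b y) ^+ 2.
Proof.
move=> q1; subst q; rewrite /sigma_max.
set c := \sum_b _; have c_ge0 : 0 <= c by apply: sumr_ge0 => i _; exact: sqr_ge0.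
pose one : 'rV[R]_1 := const_mx 1.
have -> : B^T *m B = \matrix_(i, j) (c * one 0 i * one 0 j).
  apply/matrixP => i j; rewrite !ord1 !mxE !mulr1 /c.
  by apply: eq_bigr => b _; rewrite !mxE big_ord1 expr2.
by rewrite lambda_max_rank1 // big_ord1 mxE expr1n mulr1 sqr_sqrtr.
Qed.

Lemma eq_big_cast (V : nmodType) p q (F : 'I_p -> V) (G : 'I_q -> V) : p = q ->
  (forall i j, val i = val j -> F i = G j) -> \sum_i F i = \sum_i G i.
Proof. by move=> e; subst q => FG; apply: eq_bigr => i _; apply: FG. Qed.

Section DeepLinearNetwork.
Variable R : realType.
Variable d : nat -> nat.
Notation layer_family := (forall i : nat, 'M[R]_(d i.+1, d i)).

(* Derivative of [prodW W n k] in the direction [V]: the sum over layers j of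
   the product with W j replaced by V j (Leibniz rule). *)
Fixpoint dprodW (W V : layer_family) (n k : nat) : 'M[R]_(d (k + n), d n) :=
  match k with
  | 0 => 0
  | k'.+1 => W (k' + n) *m dprodW W V n k' + V (k' + n) *m prodW W n k'
  end.

Lemma eq_prodW (W1 W2 : layer_family) n k :
  (forall i, W1 i = W2 i) -> prodW W1 n k = prodW W2 n k.
Proof. by move=> eqW; elim: k => //= k ->; rewrite eqW. Qed.

Lemma dprodW_eq0 (W V : layer_family) n k :
  (forall i, (i < k + n)%N -> V i = 0) -> dprodW W V n k = 0.
Proof.
elim: k => //= k IH V0.
by rewrite IH ?V0 ?mulmx0 ?mul0mx ?addr0 // => i lt_i; apply: V0; lia.
Qed.

Lemma prodW_line (W V : layer_family) j t n k : (forall i, i != j -> V i = 0) ->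
  prodW (fun i => W i + t *: V i) n k = prodW W n k + t *: dprodW W V n k.
Proof.
move=> V_off; elim: k => /= [|k IH]; first by rewrite scaler0 addr0.
rewrite IH mulmxDl !mulmxDr -!scalemxAl -!scalemxAr scalerDr.
have -> : V (k + n) *m dprodW W V n k = 0.
  have [kn_j|kn_neq_j] := eqVneq (k + n)%N j; last by rewrite V_off // mul0mx.
  by rewrite dprodW_eq0 ?mulmx0 // => i lt_i; apply: V_off; apply/eqP; lia.
by rewrite !scaler0 addr0 addrA.
Qed.

Lemma eq_layer_entry (V : layer_family) i i' x y x' y' :
  i = i' -> val x = val x' -> val y = val y' -> V i x y = V i' x' y'.
Proof. by move=> e; subst i' => /val_inj -> /val_inj ->. Qed.

Lemma eq_prodW_entry (W : layer_family) n k k' x y x' :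
  k = k' -> val x = val x' -> prodW W n k x y = prodW W n k' x' y.
Proof. by move=> e; subst k' => /val_inj ->. Qed.

Lemma eq_dprodW_entry (W V : layer_family) n k k' x y x' :
  k = k' -> val x = val x' -> dprodW W V n k x y = dprodW W V n k' x' y.
Proof. by move=> e; subst k' => /val_inj ->. Qed.

(* [prodW W 0 (r + j.+1)] has rows indexed by [d (r + j.+1 + 0)], which is
   only propositionally [d (r + j.+1)]: row indices are matched by value. *)
Lemma dprodW_single (W V : layer_family) j : (forall i, i != j -> V i = 0) ->
  forall r (x : 'I_(d (r + j.+1 + 0))) y (x' : 'I_(d (r + j.+1))), val x = val x' ->
  dprodW W V 0 (r + j.+1) x y =
  \sum_a \sum_b prodW W j.+1 r x' a * V j a b
                * prodW W 0 j (cast_ord (congr1 d (esym (addn0 j))) b) y.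
Proof.
move=> V_off; elim=> [|r IH] x y x' xx'.
  rewrite /= dprodW_eq0 ?mulmx0 ?add0r; last first.
    by move=> i lt_i; apply: V_off; apply/eqP; lia.
  rewrite (bigD1 x') //= [X in _ = _ + X]big1; last first.
    move=> a /negbTE a_neq; apply: big1 => b _.
    by rewrite mxE eq_sym a_neq mulr0n !mul0r.
  rewrite mxE [RHS]addr0; apply: eq_big_cast; first by rewrite ?addr0 ?addn0.
  move=> z b zb; rewrite mxE eqxx /= mul1r.
  by congr (_ * _); [apply: eq_layer_entry; rewrite ?addr0 ?addn0 | apply: eq_prodW_entry].
rewrite /= V_off; last by apply/eqP; lia.
rewrite mul0mx addr0 mxE.
under [RHS]eq_bigr do under eq_bigr do rewrite mxE mulr_suml mulr_suml.
under [RHS]eq_bigr do rewrite exchange_big /=.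
rewrite exchange_big /=; apply: eq_big_cast; first by rewrite ?addr0 ?addn0.
move=> z z' zz'; rewrite (IH _ _ z') // mulr_sumr; apply: eq_bigr => a _.
rewrite mulr_sumr; apply: eq_bigr => b _.
rewrite (@eq_layer_entry W _ (r + j.+1)%N _ _ x' z') ?addn0 //; ring.
Qed.

Variable L : nat.
Notation N := (Npar d L).
Notation block_size := (fun j : 'I_L => (d j.+1 * d j)%N).
Notation param_index i a b := (tagnat.Rank (p_ := block_size) i (mxvec_index a b)).
Notation F w := (net_out L (layers w)).

Lemma layersE (w : 'rV[R]_N) i (lt_iL : (i < L)%N) :
  layers w i = vec_mx (submxrow (q_ := block_size) w (Ordinal lt_iL)).
Proof.
rewrite /layers; move: (erefl (i < L)%N); rewrite {2 3}lt_iL => e.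
by rewrite (bool_irrelevance e lt_iL).
Qed.

Lemma layers_out (w : 'rV[R]_N) i : ~~ (i < L)%N -> layers w i = 0.
Proof.
by move=> /negbTE ge_iL; rewrite /layers; move: (erefl (i < L)%N); rewrite {2 3}ge_iL.
Qed.

Lemma layers_line (w v : 'rV[R]_N) t i :
  layers (w + t *: v) i = layers w i + t *: layers v i.
Proof.
have [lt_iL|ge_iL] := boolP (i < L)%N; last by rewrite !layers_out // scaler0 addr0.
by rewrite !layersE; apply/matrixP => a b; rewrite !mxE.
Qed.

Lemma layers_ebasis_off (k : 'I_N) i : i != tagnat.sig1 (p_ := block_size) k :> nat ->
  layers (ebasis R k) i = 0.
Proof.
move=> i_neq; have [lt_iL|] := boolP (i < L)%N; last exact: layers_out.
rewrite layersE; apply/matrixP => a b; rewrite !mxE eqxx andTb.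
rewrite -[X in _ == X](tagnat.sig2K (p_ := block_size)) -val_eqE tagnat.eq_Rank.
rewrite -val_eqE /= (_ : _ && _ = false) //; apply/negbTE.
by apply: contra i_neq => /andP [/eqP e _]; exact/eqP.
Qed.

Lemma layers_ebasis_on (i : 'I_L) (a : 'I_(d i.+1)) (b : 'I_(d i)) :
  layers (ebasis R (param_index i a b)) i = delta_mx a b.
Proof.
rewrite (layersE _ _ (ltn_ord i)) -vec_mx_delta; congr vec_mx.
apply/rowP => c; rewrite !mxE eqxx /= -!val_eqE tagnat.eq_Rank /=.
by rewrite (_ : Ordinal _ == i) // -val_eqE.
Qed.

Lemma big_params (f : 'I_N -> R) :
  \sum_k f k = \sum_(i : 'I_L) \sum_(a < d i.+1) \sum_(b < d i) f (param_index i a b).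
Proof.
transitivity (\sum_(i : 'I_L) \sum_(c : 'I_(block_size i)) f (tagnat.Rank i c)).
  rewrite sig_big_dep /= (reindex _ tagnat.sig_bij_on) /=.
  by apply: eq_bigr => k _; rewrite tagnat.sig2K.
apply: eq_bigr => i _; rewrite pair_big /= (reindex _ (curry_mxvec_bij _ _)) /=.
by apply: eq_bigr => -[a b].
Qed.

Definition net_dout (W V : layer_family) : R :=
  \sum_(x < d (L + 0)) \sum_(y < d 0) dprodW W V 0 L x y.

Lemma net_out_ebasis_line (w : 'rV[R]_N) (k : 'I_N) t :
  F (w + t *: ebasis R k) = F w + t * net_dout (layers w) (layers (ebasis R k)).
Proof.
rewrite /net_out (eq_prodW _ (fun i => layers w i + t *: layers (ebasis R k) i));
  last by move=> i; exact: layers_line.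
rewrite (prodW_line _ _ (tagnat.sig1 (p_ := block_size) k)); last first.
  by move=> i; apply: layers_ebasis_off.
rewrite /net_dout mulr_sumr -big_split; apply: eq_bigr => x _.
by rewrite mulr_sumr -big_split; apply: eq_bigr => y _; rewrite !mxE.
Qed.

(* Since [F] is affine along coordinate lines, its partial derivative is a
   finite difference. *)
Definition dnet (k : 'I_N) (w : 'rV[R]_N) : R := F (w + ebasis R k) - F w.

Lemma dnetE w k : dnet k w = net_dout (layers w) (layers (ebasis R k)).
Proof.
by rewrite /dnet -{1}[ebasis R k]scale1r net_out_ebasis_line mul1r addrAC subrr add0r.
Qed.

Lemma net_out_line w k t : F (w + t *: ebasis R k) = F w + dnet k w * t.
Proof. by rewrite net_out_ebasis_line dnetE mulrC. Qed.

Lemma partial_loss m k w : partial (loss m) k w = (F w - m) * (2 * dnet k w).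
Proof.
rewrite /partial.
have -> : (fun t => loss m (w + t *: ebasis R k)) =
   (fun t => ((m - F w) + (- dnet k w) * t) * ((m - F w) + (- dnet k w) * t)).
  by apply: funext => t; rewrite /loss net_out_line expr2; congr (_ * _); ring.
by rewrite derive1_mul_affine; ring.
Qed.

Lemma partial2_loss m k i w : partial (partial (loss m) k) i w =
  (F w - m) * (2 * (dnet i (w + ebasis R k) - dnet i w)) + dnet i w * (2 * dnet k w).
Proof.
rewrite {1}/partial.
have -> : (fun t => partial (loss m) k (w + t *: ebasis R i)) =
   (fun t => ((F w - m) + dnet i w * t) *
      (2 * dnet k w + (2 * (dnet i (w + ebasis R k) - dnet i w)) * t)).
  apply: funext => t; rewrite partial_loss net_out_line.
  have -> : dnet k (w + t *: ebasis R i) =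
             dnet k w + (dnet i (w + ebasis R k) - dnet i w) * t.
    by rewrite [in LHS]/dnet addrAC !net_out_line [dnet k w]/dnet; ring.
  ring.
by rewrite derive1_mul_affine.
Qed.

(* At a global minimiser the second-order term of the Hessian vanishes. *)
Lemma hessian_loss_min m (ws : 'rV[R]_N) : F ws = m ->
  hessian (loss m) ws =
  \matrix_(i, j) (2 * (\row_k dnet k ws) 0 i * (\row_k dnet k ws) 0 j).
Proof.
move=> min_ws; apply/matrixP => i j.
by rewrite !mxE partial2_loss min_ws subrr mul0r add0r; ring.
Qed.

Lemma lambda_max_hessian_loss_min m (ws : 'rV[R]_N) : F ws = m -> (0 < N)%N ->
  lambda_max (hessian (loss m) ws) = 2 * \sum_k dnet k ws ^+ 2.
Proof.
move=> min_ws N_gt0; rewrite hessian_loss_min // lambda_max_rank1 //.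
by congr (_ * _); apply: eq_bigr => k _; rewrite mxE.
Qed.

Lemma dnet_param (ws : 'rV[R]_N) (i : 'I_L) (a : 'I_(d i.+1)) (b : 'I_(d i)) :
  dnet (param_index i a b) ws =
  (\sum_(x < d (L - i.+1 + i.+1)) prodW (layers ws) i.+1 (L - i.+1) x a) *
  (\sum_(y < d 0) prodW (layers ws) 0 i (cast_ord (congr1 d (esym (addn0 i))) b) y).
Proof.
rewrite dnetE /net_dout; set W := layers ws; set V := layers (ebasis R _).
have V_off j : j != i :> nat -> V j = 0.
  by move=> j_neq; apply: layers_ebasis_off; rewrite tagnat.Rank1K.
have V_on : V i = delta_mx a b by exact: layers_ebasis_on.
have eqL : (L - i.+1 + i.+1)%N = L by rewrite subnK.
rewrite mulr_suml; apply: eq_big_cast; first by rewrite eqL addn0.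
move=> x x' xx'; rewrite mulr_sumr; apply: eq_bigr => y _.
have ed : d (L + 0) = d (L - i.+1 + i.+1 + 0) by rewrite eqL.
rewrite (eq_dprodW_entry W V 0 L _ x y (cast_ord ed x) (esym eqL) erefl).
rewrite (dprodW_single W V i V_off (L - i.+1) (cast_ord ed x) y x') //.
rewrite (bigD1 a) //= [X in X + _](bigD1 b) //= big1 ?addr0; last first.
  by move=> b' /negbTE b'_neq; rewrite V_on mxE eqxx b'_neq /=; ring.
rewrite big1 ?addr0; last first.
  by move=> a' /negbTE a'_neq; apply: big1 => b' _; rewrite V_on mxE a'_neq /=; ring.
by rewrite V_on mxE !eqxx /=; ring.
Qed.

Lemma sum_sq_dnet_block (ws : 'rV[R]_N) (i : 'I_L) :
  d 0 = 1%N -> d L = 1%N -> (0 < d i.+1)%N ->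
  \sum_(a < d i.+1) \sum_(b < d i) dnet (param_index i a b) ws ^+ 2 =
  sigma_max (prodW (layers ws) i.+1 (L - i.+1)) ^+ 2
  * sigma_max (prodW (layers ws) 0 i) ^+ 2.
Proof.
move=> d0 dL di_gt0.
have top_row : d (L - i.+1 + i.+1) = 1%N by rewrite subnK // dL.
rewrite (sigma_max_row _ _ _ _ top_row di_gt0) (sigma_max_col _ _ _ _ d0) mulr_suml.
apply: eq_bigr => a _; rewrite mulr_sumr.
apply: eq_big_cast; first by rewrite ?addn0 ?addr0.
move=> b b' bb'; rewrite dnet_param exprMn; congr (_ * _); congr (_ ^+ 2).
by apply: eq_bigr => y _; congr (prodW _ _ _ _ y); apply: val_inj.
Qed.

Lemma Npar_gt0 : (0 < L)%N -> (0 < d 1 * d 0)%N -> (0 < N)%N.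
Proof.
by case: L => // L' _ first_gt0; rewrite /Npar big_ord_recl addn_gt0; apply/orP; left.
Qed.

End DeepLinearNetwork.

Theorem theorem1 (R : realType) (L : nat) (d : nat -> nat) (m : R)
    (wstar : 'rV[R]_(Npar d L)) :
  (2 <= L)%N ->
  d 0%N = 1%N -> d L = 1%N ->
  (forall i, (0 < i < L)%N -> (1 <= d i)%N) ->
  net_out L (layers wstar) = m ->
  lambda_max (hessian (loss m) wstar) =
  2 * \sum_(i < L)
        sigma_max (prodW (layers wstar) i.+1 (L - i.+1)) ^+ 2
        * sigma_max (prodW (layers wstar) 0 i) ^+ 2.
Proof.
move=> L_ge2 d0 dL d_gt0 min_wstar.
have N_gt0 : (0 < Npar d L)%N.
  by apply: Npar_gt0; [lia | rewrite d0 muln1; apply: d_gt0; lia].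
rewrite lambda_max_hessian_loss_min // big_params; congr (2 * _).
apply: eq_bigr => i _; apply: sum_sq_dnet_block => //.
have [lt_iL|ge_iL] := ltnP i.+1 L; first by apply: d_gt0; rewrite lt_iL.
by rewrite (_ : i.+1 = L) ?dL //; apply/eqP; rewrite eqn_leq ge_iL ltn_ord.
Qed.
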